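(* Fix $n\in\mathbb{N}$ and consider unknown complex-valued functions $f_j$ $(0\le j\le n+1)$, $\psi_l,\varphi_l$ $(0\le l\le n)$, with the convention that $f_j,\psi_l,\varphi_l$ are zero for indices outside these ranges, and set (where $f_{n+1}\ne0$) $$a=\frac{\psi_n}{f_{n+1}},\quad b=-\frac{\varphi_n}{f_{n+1}},\quad c=2i\Big(\frac{\psi_nf_n}{f_{n+1}^2}-\frac{\psi_{n-1}}{f_{n+1}}\Big),\quad d=2i\Big(\frac{\varphi_nf_n}{f_{n+1}^2}-\frac{\varphi_{n-1}}{f_{n+1}}\Big).$$ Consider the autonomous system of ODEs in $t$ $$\dot f_j=d\psi_j-c\varphi_j+2ib\psi_{j-1}+2ia\varphi_{j-1}\ (0\le j\le n+1),$$ $$\dot\psi_l=-2cf_l+4iaf_{l-1}+2iab\psi_l-4i\psi_{l-2},\quad \dot\varphi_l=2df_l+4ibf_{l-1}-2iab\varphi_l+4i\varphi_{l-2}\ (0\le l\le n),$$ and the autonomous system of ODEs in $x$ $$f_j'=ib\psi_j+ia\varphi_j\ (0\le j\le n+1),\quad \psi_l'=2iaf_l-2i\psi_{l-1},\quad \varphi_l'=2ibf_l+2i\varphi_{l-1}\ (0\le l\le n).$$ Suppose the initial data (with $f_{n+1}\neq0$) satisfy the symmetry conditions $f_j=\overline{f_j}$ for all $j$ and $\varphi_l=-\overline{\psi_l}$ for all $l$. Then the system in $t$ has a solution defined for all $t\in\mathbb{R}$, and likewise the system in $x$ has a solution defined for all $x\in\mathbb{R}$; these solutions satisfy $f_j=\overline{f_j}$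 and $\varphi_l=-\overline{\psi_l}$ for all $t$ (respectively all $x$). *)

From Stdlib Require Export Reals.
From Coquelicot Require Export Coquelicot.
Open Scope R_scope.

(* A state: sequences indexed by nat; the convention "zero outside the
   index range" for negative indices is implemented by [sh]. *)
Definition sh (k : nat) (g : nat -> C) (l : nat) : C :=
  if (l <? k)%nat then 0%C else g (l - k)%nat.

Definition coef_a (n : nat) (f psi phi : nat -> C) : C :=
  (psi n / f (S n))%C.
Definition coef_b (n : nat) (f psi phi : nat -> C) : C :=
  (- (phi n / f (S n)))%C.
Definition coef_c (n : nat) (f psi phi : nat -> C) : C :=
  (2 * Ci * (psi n * f n / (f (S n) * f (S n)) - sh 1 psi n / f (S n)))%C.
Definition coef_d (n : nat) (f psi phi : nat -> C) : C :=
  (2 * Ci * (phi n * f n / (f (S n) * f (S n)) - sh 1 phi n / f (S n)))%C.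

Definition rhs_t_f (n : nat) (f psi phi : nat -> C) (j : nat) : C :=
  let a := coef_a n f psi phi in let b := coef_b n f psi phi in
  let c := coef_c n f psi phi in let d := coef_d n f psi phi in
  (d * psi j - c * phi j + 2 * Ci * b * sh 1 psi j + 2 * Ci * a * sh 1 phi j)%C.
Definition rhs_t_psi (n : nat) (f psi phi : nat -> C) (l : nat) : C :=
  let a := coef_a n f psi phi in let b := coef_b n f psi phi in
  let c := coef_c n f psi phi in
  (- (2 * c * f l) + 4 * Ci * a * sh 1 f l + 2 * Ci * a * b * psi l
   - 4 * Ci * sh 2 psi l)%C.
Definition rhs_t_phi (n : nat) (f psi phi : nat -> C) (l : nat) : C :=
  let a := coef_a n f psi phi in let b := coef_b n f psi phi in
  let d := coef_d n f psi phi in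
  (2 * d * f l + 4 * Ci * b * sh 1 f l - 2 * Ci * a * b * phi l
   + 4 * Ci * sh 2 phi l)%C.

Definition rhs_x_f (n : nat) (f psi phi : nat -> C) (j : nat) : C :=
  let a := coef_a n f psi phi in let b := coef_b n f psi phi in
  (Ci * b * psi j + Ci * a * phi j)%C.
Definition rhs_x_psi (n : nat) (f psi phi : nat -> C) (l : nat) : C :=
  let a := coef_a n f psi phi in
  (2 * Ci * a * f l - 2 * Ci * sh 1 psi l)%C.
Definition rhs_x_phi (n : nat) (f psi phi : nat -> C) (l : nat) : C :=
  let b := coef_b n f psi phi in
  (2 * Ci * b * f l + 2 * Ci * sh 1 phi l)%C.

Definition global_solution (n : nat)
  (Rf Rpsi Rphi : nat -> (nat -> C) -> (nat -> C) -> (nat -> C) -> nat -> C)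
  (f0 psi0 phi0 : nat -> C) (f psi phi : nat -> R -> C) : Prop :=
  (forall j, (j <= S n)%nat -> f j 0 = f0 j) /\
  (forall l, (l <= n)%nat -> psi l 0 = psi0 l /\ phi l 0 = phi0 l) /\
  (forall j s, (S n < j)%nat -> f j s = 0%C) /\
  (forall l s, (n < l)%nat -> psi l s = 0%C /\ phi l s = 0%C) /\
  (forall s, f (S n) s <> 0%C) /\
  (forall j s, (j <= S n)%nat ->
     is_derive (f j) s (Rf n (fun k => f k s) (fun k => psi k s) (fun k => phi k s) j)) /\
  (forall l s, (l <= n)%nat ->
     is_derive (psi l) s (Rpsi n (fun k => f k s) (fun k => psi k s) (fun k => phi k s) l) /\
     is_derive (phi l) s (Rphi n (fun k => f k s) (fun k => psi k s) (fun k => phi k s) l)).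

Definition symmetric_solution (n : nat) (f psi phi : nat -> R -> C) : Prop :=
  (forall j s, (j <= S n)%nat -> f j s = Cconj (f j s)) /\
  (forall l s, (l <= n)%nat -> phi l s = (- Cconj (psi l s))%C).

From Stdlib Require Import Arith Lia Lra FunctionalExtensionality.

(* Put f(x) = sum_j f_j x^j, psi(x) = sum_l psi_l x^l and phi(x) = sum_l phi_l x^l.  Along both
   flows 2 f(x) f'(x) = psi'(x) phi(x) + psi(x) phi'(x) for every x, so f(x)^2 - psi(x) phi(x) is
   conserved.  Both flows preserve the symmetry f_j real, phi_l = - conj psi_l, and keep f_(n+1)
   constant, so they reduce to a real system in 3 (n + 1) unknowns whose right-hand side is
   polynomial up to division by the nonzero constant f_(n+1); on symmetric states the conserved
   quantity is f(x)^2 + |psi(x)|^2.  Its values at the n + 2 nodes x = 0, ..., n + 1 bound f,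
   Re psi and Im psi at those nodes, hence all coefficients, so the state stays in a fixed box.
   The reduced field is Lipschitz on any box, and the solution obtained by Picard iteration for
   the field clipped to a slightly larger box never leaves it, hence exists for all times. *)

Fixpoint sum_lt (D : nat) (g : nat -> R) : R :=
  match D with O => 0 | S k => sum_lt k g + g k end.

Lemma sum_lt_le D g h : (forall j, (j < D)%nat -> g j <= h j) -> sum_lt D g <= sum_lt D h.
Proof.
  induction D as [|D IH]; simpl; intros H; [lra|].
  assert (H1 := H D ltac:(lia)). assert (sum_lt D g <= sum_lt D h) by (apply IH; auto).
  lra.
Qed.

Lemma sum_lt_const D c : sum_lt D (fun _ => c) = INR D * c.
Proof. induction D as [|D IH]; simpl sum_lt; [simpl; ring|]. rewrite IH, S_INR. ring. Qed.

Lemma sum_lt_nonneg D g : (forall j, (j < D)%nat -> 0 <= g j) -> 0 <= sum_lt D g.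
Proof.
  intros H. replace 0 with (sum_lt D (fun _ => 0)) by (rewrite sum_lt_const; ring).
  apply sum_lt_le; auto.
Qed.

Lemma sum_lt_ge_term D g j :
  (j < D)%nat -> (forall k, (k < D)%nat -> 0 <= g k) -> g j <= sum_lt D g.
Proof.
  induction D as [|D IH]; intros Hj H; [lia|]. simpl.
  assert (0 <= g D) by (apply H; lia).
  destruct (Nat.eq_dec j D) as [->|Hne].
  - assert (0 <= sum_lt D g) by (apply sum_lt_nonneg; auto). lra.
  - assert (g j <= sum_lt D g) by (apply IH; auto; lia). lra.
Qed.

Definition dist1 (D : nat) (v w : nat -> R) : R := sum_lt D (fun j => Rabs (v j - w j)).

Lemma dist1_nonneg D v w : 0 <= dist1 D v w.
Proof. apply sum_lt_nonneg. intros; apply Rabs_pos. Qed.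

Lemma abs_le_0 x : Rabs x <= 0 -> x = 0.
Proof.
  intros H. destruct (Req_dec x 0) as [|Hx]; auto.
  assert (0 < Rabs x) by (apply Rabs_pos_lt; auto). lra.
Qed.

Lemma le_of_le_plus_geometric a b C :
  0 <= C -> (forall k, a <= b + C * (/2) ^ k) -> a <= b.
Proof.
  intros HC H. destruct (Rle_or_lt a b) as [|Hab]; auto.
  destruct (pow_lt_1_zero (/2) ltac:(rewrite Rabs_right; lra) ((a - b) / (C + 1))
              ltac:(apply Rdiv_lt_0_compat; lra)) as [N HN].
  specialize (HN N (le_n _)). specialize (H N).
  assert (Hp : 0 < (/2) ^ N) by (apply pow_lt; lra).
  rewrite Rabs_right in HN by lra.
  apply Rmult_lt_compat_l with (r := C + 1) in HN; [|lra].
  replace ((C + 1) * ((a - b) / (C + 1))) with (a - b) in HN by (field; lra). nra.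
Qed.

Lemma geometric_tail_bound (x : nat -> R) C :
  (forall k, Rabs (x (S k) - x k) <= C * (/2) ^ k) ->
  forall k p, Rabs (x (k + p)%nat - x k) <= 2 * C * (/2) ^ k.
Proof.
  intros H k p.
  assert (HC : 0 <= C).
  { specialize (H O). simpl in H. assert (0 <= Rabs (x 1%nat - x 0%nat)) by apply Rabs_pos. lra. }
  assert (Htel : Rabs (x (k + p)%nat - x k) <= 2 * C * (/2) ^ k - 2 * C * (/2) ^ (k + p)).
  { induction p as [|p IH].
    - rewrite Nat.add_0_r. unfold Rminus. rewrite Rplus_opp_r, Rabs_R0. lra.
    - rewrite Nat.add_succ_r. specialize (H (k + p)%nat).
      replace (x (S (k + p)) - x k)
        with ((x (S (k + p)) - x (k + p)%nat) + (x (k + p)%nat - x k)) by ring.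
      eapply Rle_trans; [apply Rabs_triang|]. simpl pow. lra. }
  assert (0 < (/2) ^ (k + p)) by (apply pow_lt; lra). nra.
Qed.

Lemma cauchy_geometric (x : nat -> R) C :
  (forall k, Rabs (x (S k) - x k) <= C * (/2) ^ k) ->
  is_lim_seq x (real (Lim_seq x)) /\
  forall k, Rabs (x k - real (Lim_seq x)) <= 2 * C * (/2) ^ k.
Proof.
  intros H. assert (Htail := geometric_tail_bound x C H).
  assert (Hpos : forall k, 0 < (/2) ^ k) by (intros; apply pow_lt; lra).
  assert (HC : 0 <= C).
  { specialize (H O). simpl in H. assert (0 <= Rabs (x 1%nat - x 0%nat)) by apply Rabs_pos. lra. }
  assert (Hlim : is_lim_seq x (real (Lim_seq x))).
  { apply Lim_seq_correct', ex_lim_seq_cauchy_corr. intros eps.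
    destruct (pow_lt_1_zero (/2) ltac:(rewrite Rabs_right; lra) (eps / (4 * C + 1))
                ltac:(apply Rdiv_lt_0_compat; [apply cond_pos|lra])) as [N HN].
    exists N. intros p q Hp Hq. specialize (HN N (le_n _)).
    rewrite Rabs_right in HN by (apply Rle_ge, Rlt_le, Hpos).
    replace p with (N + (p - N))%nat by lia. replace q with (N + (q - N))%nat by lia.
    replace (x (N + (p - N))%nat - x (N + (q - N))%nat)
      with ((x (N + (p - N))%nat - x N) - (x (N + (q - N))%nat - x N)) by ring.
    eapply Rle_lt_trans; [apply Rabs_triang|]. rewrite Rabs_Ropp.
    assert (H1 := Htail N (p - N)%nat). assert (H2 := Htail N (q - N)%nat).
    apply Rmult_lt_compat_l with (r := 4 * C + 1) in HN; [|lra].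
    replace ((4 * C + 1) * (eps / (4 * C + 1))) with (pos eps) in HN by (field; lra).
    specialize (Hpos N). nra. }
  split; [exact Hlim|]. intros k.
  assert (Hl : is_lim_seq (fun p => Rabs (x (p + k)%nat - x k)) (Rabs (real (Lim_seq x) - x k))).
  { apply (is_lim_seq_abs _ (Finite (real (Lim_seq x) - x k))).
    apply is_lim_seq_minus'; [apply (is_lim_seq_incr_n x k); exact Hlim|apply is_lim_seq_const]. }
  assert (Hb : forall p, Rabs (x (p + k)%nat - x k) <= 2 * C * (/2) ^ k)
    by (intros p; rewrite Nat.add_comm; apply Htail).
  rewrite Rabs_minus_sym. apply (is_lim_seq_le _ _ _ _ Hb Hl (is_lim_seq_const _)).
Qed.

Lemma continuous_of_lipschitz (g : R -> R) K :
  0 <= K -> (forall x y, Rabs (g x - g y) <= K * Rabs (x - y)) -> forall x, continuous g x.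
Proof.
  intros HK H x. apply continuity_pt_filterlim. intros eps Heps.
  exists (eps / (K + 1)). split; [apply Rdiv_lt_0_compat; lra|].
  intros y [_ Hy]. simpl in *. unfold R_dist in *.
  assert (0 <= Rabs (y - x)) by apply Rabs_pos.
  apply Rmult_lt_compat_l with (r := K + 1) in Hy; [|lra].
  replace ((K + 1) * (eps / (K + 1))) with eps in Hy by (field; lra).
  specialize (H y x). nra.
Qed.

Lemma continuous_of_is_derive (g : R -> R) s d : is_derive g s d -> continuous g s.
Proof. intros H. apply (ex_derive_continuous g s). exists d. exact H. Qed.

Lemma ex_RInt_continuous_R (g : R -> R) a b : (forall x, continuous g x) -> ex_RInt g a b.
Proof. intros H. apply (ex_RInt_continuous (V := R_CompleteNormedModule)). auto. Qed.

Lemma RInt_minus_from_0 (g : R -> R) t s :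
  (forall x, continuous g x) -> RInt g 0 t - RInt g 0 s = RInt g s t.
Proof.
  intros Hg.
  rewrite <- (RInt_Chasles g s 0 t), <- (opp_RInt_swap g 0 s)
    by (apply ex_RInt_continuous_R; auto).
  change (plus (opp (RInt g 0 s)) (RInt g 0 t)) with (- RInt g 0 s + RInt g 0 t). ring.
Qed.

Lemma abs_RInt_le_const_R (g : R -> R) M a b :
  (forall x, continuous g x) -> (forall x, Rabs (g x) <= M) ->
  Rabs (RInt g a b) <= M * Rabs (b - a).
Proof.
  intros Hc HM.
  assert (Hex : forall a b, ex_RInt g a b) by (intros; apply ex_RInt_continuous_R; auto).
  destruct (Rle_or_lt a b) as [Hab|Hab].
  - rewrite (Rabs_right (b - a)), Rmult_comm by lra. apply abs_RInt_le_const; auto.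
  - rewrite <- opp_RInt_swap by auto.
    change (opp (RInt g b a)) with (- RInt g b a). rewrite Rabs_Ropp.
    rewrite (Rabs_left (b - a)) by lra. replace (- (b - a)) with (a - b) by ring.
    rewrite Rmult_comm. apply abs_RInt_le_const; auto; lra.
Qed.

Lemma RInt_scaled_exp K c a b : c <> 0 ->
  RInt (fun s => K * exp (c * s)) a b = K * (exp (c * b) - exp (c * a)) / c.
Proof.
  intros Hc. apply is_RInt_unique.
  replace (K * (exp (c * b) - exp (c * a)) / c)
    with (minus (K * exp (c * b) / c) (K * exp (c * a) / c))
    by (unfold minus, plus, opp; simpl; field; auto).
  apply (is_RInt_derive (V := R_CompleteNormedModule) (fun s => K * exp (c * s) / c)).
  - intros x _. auto_derive; auto. field. auto.
  - intros x _. apply (continuous_of_is_derive _ _ (K * c * exp (c * x))). auto_derive; auto. ring.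
Qed.

Lemma abs_RInt_le_exp (g : R -> R) K c t :
  0 < c -> 0 <= K -> (forall x, continuous g x) ->
  (forall s, Rabs (g s) <= K * exp (c * Rabs s)) ->
  Rabs (RInt g 0 t) <= K * exp (c * Rabs t) / c.
Proof.
  intros Hc HK Hg Hb.
  assert (Hag : forall x, continuous (fun s => Rabs (g s)) x)
    by (intros; apply continuous_Rabs_comp; auto).
  assert (Hexp : forall e, forall x, continuous (fun s => K * exp (e * s)) x).
  { intros e x. apply (continuous_of_is_derive _ _ (K * e * exp (e * x))). auto_derive; auto.
    ring. }
  assert (Hinv : 0 < / c) by (apply Rinv_0_lt_compat; auto).
  assert (He : 0 <= K * exp (c * Rabs t)) by (apply Rmult_le_pos; [auto|apply Rlt_le, exp_pos]).
  destruct (Rle_or_lt 0 t) as [Ht|Ht].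
  - eapply Rle_trans; [apply abs_RInt_le; auto; apply ex_RInt_continuous_R; auto|].
    eapply Rle_trans.
    { apply RInt_le with (g := fun s => K * exp (c * s)); auto;
        try (apply ex_RInt_continuous_R; auto).
      intros x Hx. rewrite <- (Rabs_right x) at 2 by lra. auto. }
    rewrite RInt_scaled_exp, Rmult_0_r, exp_0, Rabs_right by lra.
    unfold Rdiv. apply Rmult_le_compat_r; nra.
  - rewrite <- opp_RInt_swap by (apply ex_RInt_continuous_R; auto).
    change (opp (RInt g t 0)) with (- RInt g t 0). rewrite Rabs_Ropp.
    eapply Rle_trans; [apply abs_RInt_le; try lra; apply ex_RInt_continuous_R; auto|].
    eapply Rle_trans.
    { apply RInt_le with (g := fun s => K * exp (- c * s)); try lra;
        try (apply ex_RInt_continuous_R; auto).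
      intros x Hx. replace (- c * x) with (c * Rabs x) by (rewrite Rabs_left by lra; ring). auto. }
    rewrite RInt_scaled_exp, Rmult_0_r, exp_0, (Rabs_left t) by lra.
    replace (- c * t) with (c * - t) by ring.
    replace (K * (1 - exp (c * - t)) / - c) with ((K * exp (c * - t) - K) * / c)
      by (field; lra).
    apply Rmult_le_compat_r; lra.
Qed.

Definition lipschitz_field (D : nat) (G : (nat -> R) -> nat -> R) (L : R) : Prop :=
  forall i v w, (i < D)%nat -> Rabs (G v i - G w i) <= L * dist1 D v w.

Definition bounded_field (D : nat) (G : (nat -> R) -> nat -> R) (M : R) : Prop :=
  forall i v, (i < D)%nat -> Rabs (G v i) <= M.

Fixpoint picard (G : (nat -> R) -> nat -> R) (u0 : nat -> R) (k : nat) : nat -> R -> R :=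
  match k with
  | O => fun i _ => u0 i
  | S k => fun i t => u0 i + RInt (fun s => G (fun j => picard G u0 k j s) i) 0 t
  end.

Lemma picard_at_0 G u0 k i : picard G u0 k i 0 = u0 i.
Proof. destruct k; simpl; auto. rewrite RInt_point. change (u0 i + 0 = u0 i). ring. Qed.

Section Picard.

Variables (D : nat) (G : (nat -> R) -> nat -> R) (L M : R) (u0 : nat -> R).
Hypotheses (HL : lipschitz_field D G L) (HM : bounded_field D G M) (HL0 : 0 < L) (HM0 : 0 <= M).

Lemma field_along_continuous (w : nat -> R -> R) i x :
  (forall j t s, (j < D)%nat -> Rabs (w j t - w j s) <= M * Rabs (t - s)) ->
  (i < D)%nat -> continuous (fun s => G (fun j => w j s) i) x.
Proof.
  intros Hw Hi. apply continuous_of_lipschitz with (K := L * (INR D * M)).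
  { assert (0 <= INR D) by apply pos_INR. apply Rmult_le_pos; [lra|]. nra. }
  intros y z. eapply Rle_trans; [apply HL; auto|].
  replace (L * (INR D * M) * Rabs (y - z)) with (L * sum_lt D (fun _ => M * Rabs (y - z)))
    by (rewrite sum_lt_const; ring).
  apply Rmult_le_compat_l; [lra|]. apply sum_lt_le. auto.
Qed.

Lemma picard_lipschitz k i t s :
  (i < D)%nat -> Rabs (picard G u0 k i t - picard G u0 k i s) <= M * Rabs (t - s).
Proof.
  revert i t s. induction k as [|k IH]; intros i t s Hi; simpl.
  - unfold Rminus. rewrite Rplus_opp_r, Rabs_R0. apply Rmult_le_pos; auto. apply Rabs_pos.
  - assert (Hc : forall x, continuous (fun r => G (fun j => picard G u0 k j r) i) x)
      by (intros; apply field_along_continuous; auto).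
    replace (u0 i + RInt (fun r => G (fun j => picard G u0 k j r) i) 0 t -
             (u0 i + RInt (fun r => G (fun j => picard G u0 k j r) i) 0 s))
      with (RInt (fun r => G (fun j => picard G u0 k j r) i) 0 t -
            RInt (fun r => G (fun j => picard G u0 k j r) i) 0 s) by ring.
    rewrite RInt_minus_from_0 by auto.
    apply abs_RInt_le_const_R; auto.
Qed.

(* The weight [exp (rate |t|)] makes the Picard iteration contract on all of R at once. *)
Let rate := 2 * L * (INR D + 1).
Let scale := M / rate.

Lemma rate_pos : 0 < rate.
Proof. unfold rate. assert (0 <= INR D) by apply pos_INR. nra. Qed.

Lemma scale_nonneg : 0 <= scale.
Proof. unfold scale. apply Rmult_le_pos; auto. apply Rlt_le, Rinv_0_lt_compat, rate_pos. Qed.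

Lemma picard_weight_nonneg t : 0 <= scale * exp (rate * Rabs t).
Proof. apply Rmult_le_pos; [apply scale_nonneg|apply Rlt_le, exp_pos]. Qed.

Lemma L_dim_div_rate : L * INR D / rate <= / 2.
Proof.
  assert (0 <= INR D) by apply pos_INR. assert (Hc := rate_pos).
  apply Rmult_le_reg_r with rate; auto. unfold rate in *. field_simplify; nra.
Qed.

Lemma RInt_field_contract (w1 w2 : nat -> R -> R) B i t :
  0 <= B -> (i < D)%nat ->
  (forall j, (j < D)%nat -> forall x, continuous (fun s => G (fun k => w1 k s) j) x) ->
  (forall j, (j < D)%nat -> forall x, continuous (fun s => G (fun k => w2 k s) j) x) ->
  (forall j s, (j < D)%nat -> Rabs (w1 j s - w2 j s) <= B * exp (rate * Rabs s)) ->
  Rabs (RInt (fun s => G (fun k => w1 k s) i - G (fun k => w2 k s) i) 0 t)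
    <= / 2 * (B * exp (rate * Rabs t)).
Proof.
  intros HB Hi H1 H2 Hw.
  assert (HK : 0 <= L * (INR D * B)).
  { assert (0 <= INR D) by apply pos_INR. apply Rmult_le_pos; [lra|]. nra. }
  eapply Rle_trans.
  { apply (abs_RInt_le_exp _ (L * (INR D * B)) rate t rate_pos HK).
    - intros x. apply (continuous_minus (fun s => G (fun k => w1 k s) i)); auto.
    - intros s. eapply Rle_trans; [apply HL; auto|].
      replace (L * (INR D * B) * exp (rate * Rabs s))
        with (L * sum_lt D (fun _ => B * exp (rate * Rabs s))) by (rewrite sum_lt_const; ring).
      apply Rmult_le_compat_l; [lra|]. apply sum_lt_le. auto. }
  assert (Hc := rate_pos). assert (H := L_dim_div_rate).
  assert (0 <= B * exp (rate * Rabs t)) by (apply Rmult_le_pos; [auto|apply Rlt_le, exp_pos]).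
  replace (L * (INR D * B) * exp (rate * Rabs t) / rate)
    with (B * exp (rate * Rabs t) * (L * INR D / rate)) by (field; lra).
  nra.
Qed.

Lemma picard_continuous k i x : (i < D)%nat ->
  continuous (fun s => G (fun j => picard G u0 k j s) i) x.
Proof. intros Hi. apply field_along_continuous; auto. intros; apply picard_lipschitz; auto. Qed.

Lemma picard_succ_diff k i t : (i < D)%nat ->
  Rabs (picard G u0 (S k) i t - picard G u0 k i t) <= scale * (/2) ^ k * exp (rate * Rabs t).
Proof.
  revert i t. induction k as [|k IH]; intros i t Hi.
  - simpl picard. rewrite Rplus_comm, Rplus_minus_r.
    eapply Rle_trans.
    { apply abs_RInt_le_const_R; [intros; apply continuous_const|intros; apply HM; auto]. }
    rewrite Rminus_0_r, pow_O, Rmult_1_r.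
    assert (H1 := exp_ineq1_le (rate * Rabs t)). assert (0 <= Rabs t) by apply Rabs_pos.
    assert (Hc := rate_pos). assert (HA := scale_nonneg).
    replace M with (scale * rate) by (unfold scale; field; lra). nra.
  - change (picard G u0 (S (S k)) i t)
      with (u0 i + RInt (fun s => G (fun j => picard G u0 (S k) j s) i) 0 t).
    change (picard G u0 (S k) i t)
      with (u0 i + RInt (fun s => G (fun j => picard G u0 k j s) i) 0 t).
    rewrite Rplus_comm, Rminus_plus_r_l.
    rewrite <- (RInt_minus (V := R_CompleteNormedModule))
      by (apply ex_RInt_continuous_R; intros; apply picard_continuous; auto).
    assert (Hp : 0 <= scale * (/2) ^ k)
      by (apply Rmult_le_pos; [apply scale_nonneg|apply pow_le; lra]).
    eapply Rle_trans.
    { apply (RInt_field_contract _ _ (scale * (/2) ^ k)); auto;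
        intros; apply picard_continuous; auto. }
    simpl pow. lra.
Qed.

Definition picard_limit (i : nat) (t : R) : R := real (Lim_seq (fun k => picard G u0 k i t)).

Lemma picard_limit_close k i t : (i < D)%nat ->
  Rabs (picard G u0 k i t - picard_limit i t) <= 2 * (scale * exp (rate * Rabs t)) * (/2) ^ k.
Proof.
  intros Hi. apply (cauchy_geometric (fun k => picard G u0 k i t)). intros m.
  eapply Rle_trans; [apply picard_succ_diff; auto|right; ring].
Qed.

Lemma picard_limit_lipschitz i t s : (i < D)%nat ->
  Rabs (picard_limit i t - picard_limit i s) <= M * Rabs (t - s).
Proof.
  intros Hi. assert (Ht := picard_weight_nonneg t). assert (Hs := picard_weight_nonneg s).
  apply le_of_le_plus_geometric
    with (C := 2 * (scale * exp (rate * Rabs t)) + 2 * (scale * exp (rate * Rabs s))); [lra|].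
  intros k. assert (H1 := picard_limit_close k i t Hi). assert (H2 := picard_limit_close k i s Hi).
  assert (H3 := picard_lipschitz k i t s Hi). rewrite Rabs_minus_sym in H1.
  replace (picard_limit i t - picard_limit i s)
    with ((picard_limit i t - picard G u0 k i t) + (picard G u0 k i t - picard G u0 k i s)
          + (picard G u0 k i s - picard_limit i s)) by ring.
  eapply Rle_trans; [apply Rabs_triang|].
  eapply Rle_trans; [apply Rplus_le_compat_r, Rabs_triang|]. lra.
Qed.

Lemma picard_limit_at_0 i : (i < D)%nat -> picard_limit i 0 = u0 i.
Proof.
  intros Hi. symmetry. apply Rminus_diag_uniq, abs_le_0.
  apply le_of_le_plus_geometric with (C := 2 * (scale * exp (rate * Rabs 0))).
  { assert (H := picard_weight_nonneg 0). lra. }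
  intros k. rewrite Rplus_0_l, <- (picard_at_0 G u0 k i) at 1. apply picard_limit_close; auto.
Qed.

Lemma picard_limit_continuous i x : (i < D)%nat ->
  continuous (fun s => G (fun j => picard_limit j s) i) x.
Proof.
  intros Hi. apply field_along_continuous; auto. intros; apply picard_limit_lipschitz; auto.
Qed.

Lemma picard_limit_integral i t : (i < D)%nat ->
  picard_limit i t = u0 i + RInt (fun s => G (fun j => picard_limit j s) i) 0 t.
Proof.
  intros Hi. apply Rminus_diag_uniq, abs_le_0.
  assert (Hw := picard_weight_nonneg t).
  apply le_of_le_plus_geometric
    with (C := 2 * (scale * exp (rate * Rabs t)) + scale * exp (rate * Rabs t)); [lra|].
  intros k. rewrite Rplus_0_l.
  assert (E : picard_limit i t - (u0 i + RInt (fun s => G (fun j => picard_limit j s) i) 0 t)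
    = (picard_limit i t - picard G u0 (S k) i t)
      + RInt (fun s => G (fun j => picard G u0 k j s) i - G (fun j => picard_limit j s) i) 0 t).
  { simpl picard. rewrite (RInt_minus (V := R_CompleteNormedModule))
      by (apply ex_RInt_continuous_R; intros;
          first [apply picard_continuous | apply picard_limit_continuous]; auto).
    unfold minus, plus, opp; simpl. ring. }
  rewrite E. eapply Rle_trans; [apply Rabs_triang|].
  assert (B1 := picard_limit_close (S k) i t Hi). rewrite Rabs_minus_sym in B1. simpl pow in B1.
  assert (B2 := RInt_field_contract (picard G u0 k) picard_limit (2 * scale * (/2) ^ k) i t).
  assert (Hp : 0 < (/2) ^ k) by (apply pow_lt; lra). assert (HA := scale_nonneg).
  assert (Hr : Rabs (RInt (fun s => G (fun j => picard G u0 k j s) i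
                                  - G (fun j => picard_limit j s) i) 0 t)
               <= / 2 * (2 * scale * (/2) ^ k * exp (rate * Rabs t))).
  { apply B2; auto; [apply Rmult_le_pos; lra| | |];
      intros; try (apply picard_continuous; auto); try (apply picard_limit_continuous; auto).
    eapply Rle_trans; [apply picard_limit_close; auto|]. right; ring. }
  nra.
Qed.

End Picard.

Theorem ode_global_existence D G L M u0 :
  lipschitz_field D G L -> bounded_field D G M -> 0 < L -> 0 <= M ->
  exists u : nat -> R -> R,
    (forall i, (i < D)%nat -> u i 0 = u0 i) /\
    (forall i t, (i < D)%nat -> is_derive (u i) t (G (fun j => u j t) i)) /\
    (forall i t s, (i < D)%nat -> Rabs (u i t - u i s) <= M * Rabs (t - s)).
Proof.
  intros HL HM HL0 HM0. exists (picard_limit G u0). split; [|split].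
  - intros i Hi. apply (picard_limit_at_0 D G L M); auto.
  - intros i t Hi. set (g := fun s => G (fun j => picard_limit G u0 j s) i).
    assert (Hg : forall x, continuous g x)
      by (intros; apply (picard_limit_continuous D G L M); auto).
    apply (is_derive_ext (fun t => u0 i + RInt g 0 t)).
    { intros; symmetry; apply (picard_limit_integral D G L M); auto. }
    assert (H := is_derive_plus (fun _ => u0 i) (fun t => RInt g 0 t) t zero (g t)
      (is_derive_const _ _)
      (is_derive_RInt g (fun t => RInt g 0 t) 0 t
        (filter_forall _ (fun b => RInt_correct g 0 b (ex_RInt_continuous_R g 0 b Hg))) (Hg t))).
    rewrite plus_zero_l in H. exact H.
  - intros i t s Hi. apply (picard_limit_lipschitz D G L M); auto.
Qed.

Fixpoint horner (c : nat -> R) (d : nat) (x : R) : R :=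
  match d with O => c O | S d => c O + x * horner (fun k => c (S k)) d x end.

Definition cons_coef (a0 : R) (b : nat -> R) (k : nat) : R :=
  match k with O => a0 | S k => b k end.

Lemma horner_ext c e d x : (forall k, (k <= d)%nat -> c k = e k) -> horner c d x = horner e d x.
Proof.
  revert c e. induction d as [|d IH]; intros c e H; simpl; [apply H; lia|].
  rewrite H by lia. f_equal. f_equal. apply IH. intros; apply H; lia.
Qed.

Lemma horner_lin c e a b d x :
  horner (fun k => a * c k + b * e k) d x = a * horner c d x + b * horner e d x.
Proof.
  revert c e. induction d as [|d IH]; intros c e; simpl; auto.
  rewrite (IH (fun k => c (S k)) (fun k => e (S k))). ring.
Qed.

Lemma horner_S c d x : horner c (S d) x = horner c d x + c (S d) * x ^ S d.
Proof.
  revert c. induction d as [|d IH]; intros c; [simpl; ring|].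
  change (horner c (S (S d)) x) with (c O + x * horner (fun k => c (S k)) (S d) x).
  rewrite IH. simpl. ring.
Qed.

Lemma horner_zero c d x : (forall k, (k <= d)%nat -> c k = 0) -> horner c d x = 0.
Proof.
  revert c. induction d as [|d IH]; intros c H; simpl; [apply H; lia|].
  rewrite H, IH by (intros; try apply H; lia). ring.
Qed.

Lemma horner_add_const a0 b d x :
  a0 + horner b d x = horner (cons_coef (a0 + b O) (fun k => b (S k))) d x.
Proof. destruct d; simpl; [auto|]. rewrite Rplus_assoc. reflexivity. Qed.

Lemma horner_add_mul_x d : forall a b, exists g,
  (forall x, horner a d x + x * horner b d x = horner g (S d) x) /\ g (S d) = b d.
Proof.
  induction d as [|d IH]; intros a b.
  - exists (cons_coef (a O) (fun _ => b O)). split; [intros x; simpl; ring|reflexivity].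
  - destruct (IH (cons_coef (a 1%nat + b O) (fun k => a (S (S k)))) (fun k => b (S k)))
      as [g [Hg Htop]].
    exists (cons_coef (a O) g). split; [|exact Htop].
    intros x. change (horner (cons_coef (a O) g) (S (S d)) x) with (a O + x * horner g (S d) x).
    rewrite <- Hg. simpl.
    replace (horner (cons_coef (a 1%nat + b O) (fun k => a (S (S k)))) d x)
      with (b O + horner (fun k => a (S k)) d x); [ring|].
    rewrite horner_add_const. apply horner_ext. intros [|k] _; simpl; [ring|auto].
Qed.

Lemma horner_shift d : forall c, exists g,
  (forall x, horner c d (x + 1) = horner g d x) /\ g d = c d.
Proof.
  induction d as [|d IH]; intros c; [exists c; split; auto|].
  destruct (IH (fun k => c (S k))) as [g' [Hg' Htop']].
  destruct (horner_add_mul_x d (cons_coef (c O + g' O) (fun k => g' (S k))) g') as [g [Hg Htop]].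
  exists g. split; [|rewrite Htop; auto].
  intros x. rewrite <- Hg, <- horner_add_const. simpl. rewrite Hg'. ring.
Qed.

Lemma horner_forward_diff d : forall c, exists e,
  (forall x, horner c (S d) (x + 1) - horner c (S d) x = horner e d x) /\
  e d = INR (S d) * c (S d).
Proof.
  induction d as [|d IH]; intros c.
  - exists (fun _ => c 1%nat). split; [intros x; simpl; ring|simpl; ring].
  - destruct (IH (fun k => c (S k))) as [e' [He' Htop']].
    destruct (horner_shift (S d) (fun k => c (S k))) as [g [Hg Htop]].
    exists (cons_coef (g O) (fun k => 1 * g (S k) + 1 * e' k)). split.
    + intros x. change (horner (cons_coef _ _) (S d) x)
        with (g O + x * horner (fun k => 1 * g (S k) + 1 * e' k) d x).
      rewrite horner_lin.
      change (horner c (S (S d)) (x + 1))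
        with (c O + (x + 1) * horner (fun k => c (S k)) (S d) (x + 1)).
      change (horner c (S (S d)) x) with (c O + x * horner (fun k => c (S k)) (S d) x).
      rewrite <- He', Hg. change (horner g (S d) x) with (g O + x * horner (fun k => g (S k)) d x).
      ring.
    + simpl cons_coef. rewrite Htop', Htop, !S_INR. ring.
Qed.

(* Repeated forward differences isolate the leading coefficient. *)
Lemma horner_lead_bound d : exists K, 0 <= K /\ forall c B,
  (forall m, (m <= d)%nat -> Rabs (horner c d (INR m)) <= B) -> Rabs (c d) <= K * B.
Proof.
  induction d as [|d [K [HK IH]]].
  - exists 1. split; [lra|]. intros c B H. specialize (H O (le_n _)). simpl in H. lra.
  - exists (2 * K). split; [lra|]. intros c B H.
    destruct (horner_forward_diff d c) as [e [He Htop]].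
    assert (Hb : Rabs (e d) <= K * (2 * B)).
    { apply IH. intros m Hm. rewrite <- He, <- S_INR.
      unfold Rminus. eapply Rle_trans; [apply Rabs_triang|]. rewrite Rabs_Ropp.
      assert (H1 := H (S m) ltac:(lia)). assert (H2 := H m ltac:(lia)). lra. }
    rewrite Htop, Rabs_mult, Rabs_right in Hb by (apply Rle_ge, pos_INR).
    assert (1 <= INR (S d)) by (rewrite S_INR; assert (0 <= INR d) by apply pos_INR; lra).
    assert (0 <= Rabs (c (S d))) by apply Rabs_pos. nra.
Qed.

Lemma horner_coef_bound d : exists K, 0 <= K /\ forall c B,
  (forall m, (m <= d)%nat -> Rabs (horner c d (INR m)) <= B) ->
  forall k, (k <= d)%nat -> Rabs (c k) <= K * B.
Proof.
  induction d as [|d [K2 [HK2 IH]]].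
  - exists 1. split; [lra|]. intros c B H k Hk. replace k with O by lia.
    specialize (H O (le_n _)). simpl in H. lra.
  - destruct (horner_lead_bound (S d)) as [K1 [HK1 Hlead]].
    set (N := (INR d + 1) ^ S d).
    assert (HN : 0 <= N) by (apply pow_le; assert (0 <= INR d) by apply pos_INR; lra).
    exists (K1 + K2 * (1 + K1 * N)).
    split; [assert (0 <= K2 * (1 + K1 * N)) by (apply Rmult_le_pos; nra); lra|].
    intros c B H k Hk.
    assert (HB : 0 <= B)
      by (assert (H0 := H O ltac:(lia)); assert (H1 := Rabs_pos (horner c (S d) (INR 0))); lra).
    assert (Ht := Hlead c B H).
    assert (Hlow : forall k, (k <= d)%nat -> Rabs (c k) <= K2 * ((1 + K1 * N) * B)).
    { apply IH. intros m Hm.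
      replace (horner c d (INR m)) with (horner c (S d) (INR m) - c (S d) * INR m ^ S d)
        by (rewrite horner_S; ring).
      unfold Rminus. eapply Rle_trans; [apply Rabs_triang|]. rewrite Rabs_Ropp, Rabs_mult.
      assert (H1 := H m ltac:(lia)).
      assert (Hm' : Rabs (INR m ^ S d) <= N).
      { rewrite Rabs_right by (apply Rle_ge, pow_le, pos_INR). apply pow_incr.
        split; [apply pos_INR|]. assert (INR m <= INR d) by (apply le_INR; lia). lra. }
      assert (Rabs (c (S d)) * Rabs (INR m ^ S d) <= K1 * B * N).
      { apply Rle_trans with (Rabs (c (S d)) * N);
          [apply Rmult_le_compat_l; [apply Rabs_pos|auto]|apply Rmult_le_compat_r; auto]. }
      nra. }
    destruct (Nat.eq_dec k (S d)) as [->|Hne].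
    + assert (0 <= K2 * (1 + K1 * N) * B) by (repeat apply Rmult_le_pos; nra). nra.
    + assert (H1 := Hlow k ltac:(lia)). assert (0 <= K1 * B) by nra. nra.
Qed.

Definition in_box (D : nat) (Rb : R) (v : nat -> R) : Prop :=
  forall j, (j < D)%nat -> Rabs (v j) <= Rb.

Definition lip_on_box (D : nat) (Rb : R) (g : (nat -> R) -> R) : Prop :=
  exists L M, 0 <= L /\
    (forall v w, in_box D Rb v -> in_box D Rb w -> Rabs (g v - g w) <= L * dist1 D v w) /\
    (forall v, in_box D Rb v -> Rabs (g v) <= M).

Section LipOnBox.

Variables (D : nat) (Rb : R).

Lemma lip_on_box_ext g h : (forall v, g v = h v) -> lip_on_box D Rb g -> lip_on_box D Rb h.
Proof.
  intros E [L [M [HL [H1 H2]]]]. exists L, M. split; auto. split; intros; rewrite <- ?E; auto.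
Qed.

Lemma lip_on_box_const a : lip_on_box D Rb (fun _ => a).
Proof.
  exists 0, (Rabs a). split; [lra|]. split; intros; [|lra].
  unfold Rminus. rewrite Rplus_opp_r, Rabs_R0, Rmult_0_l. lra.
Qed.

Lemma lip_on_box_coord j : (j < D)%nat -> lip_on_box D Rb (fun v => v j).
Proof.
  intros Hj. exists 1, Rb. split; [lra|]. split; [|intros v Hv; apply Hv; auto].
  intros v w _ _. rewrite Rmult_1_l.
  apply (sum_lt_ge_term D (fun j => Rabs (v j - w j))); auto. intros; apply Rabs_pos.
Qed.

Lemma lip_on_box_plus g h :
  lip_on_box D Rb g -> lip_on_box D Rb h -> lip_on_box D Rb (fun v => g v + h v).
Proof.
  intros [L1 [M1 [HL1 [A1 B1]]]] [L2 [M2 [HL2 [A2 B2]]]].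
  exists (L1 + L2), (M1 + M2). split; [lra|]. split.
  - intros v w Hv Hw. replace (g v + h v - (g w + h w)) with ((g v - g w) + (h v - h w)) by ring.
    eapply Rle_trans; [apply Rabs_triang|].
    specialize (A1 v w Hv Hw). specialize (A2 v w Hv Hw). lra.
  - intros v Hv. eapply Rle_trans; [apply Rabs_triang|].
    specialize (B1 v Hv). specialize (B2 v Hv). lra.
Qed.

Lemma lip_on_box_opp g : lip_on_box D Rb g -> lip_on_box D Rb (fun v => - g v).
Proof.
  intros [L [M [HL [A1 B1]]]]. exists L, M. split; auto. split.
  - intros v w Hv Hw. replace (- g v - - g w) with (- (g v - g w)) by ring. rewrite Rabs_Ropp. auto.
  - intros v Hv. rewrite Rabs_Ropp. auto.
Qed.

Lemma lip_on_box_mult g h :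
  lip_on_box D Rb g -> lip_on_box D Rb h -> lip_on_box D Rb (fun v => g v * h v).
Proof.
  intros [L1 [M1 [HL1 [A1 B1]]]] [L2 [M2 [HL2 [A2 B2]]]].
  assert (HM1 := Rabs_pos M1). assert (HM2 := Rabs_pos M2).
  exists (Rabs M1 * L2 + Rabs M2 * L1), (Rabs M1 * Rabs M2). split; [nra|]. split.
  - intros v w Hv Hw.
    replace (g v * h v - g w * h w) with (g v * (h v - h w) + h w * (g v - g w)) by ring.
    eapply Rle_trans; [apply Rabs_triang|]. rewrite !Rabs_mult.
    assert (Hgv : Rabs (g v) <= Rabs M1) by (eapply Rle_trans; [apply B1; auto|apply Rle_abs]).
    assert (Hhw : Rabs (h w) <= Rabs M2) by (eapply Rle_trans; [apply B2; auto|apply Rle_abs]).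
    assert (E1 : Rabs (g v) * Rabs (h v - h w) <= Rabs M1 * (L2 * dist1 D v w))
      by (apply Rmult_le_compat; auto; apply Rabs_pos).
    assert (E2 : Rabs (h w) * Rabs (g v - g w) <= Rabs M2 * (L1 * dist1 D v w))
      by (apply Rmult_le_compat; auto; apply Rabs_pos).
    lra.
  - intros v Hv. rewrite Rabs_mult.
    apply Rmult_le_compat; try apply Rabs_pos;
      (eapply Rle_trans; [first [apply B1 | apply B2]; auto|apply Rle_abs]).
Qed.

Lemma lip_on_box_uniform (g : nat -> (nat -> R) -> R) :
  (forall i, (i < D)%nat -> lip_on_box D Rb (g i)) ->
  exists L M, 0 <= L /\ 0 <= M /\ forall i, (i < D)%nat ->
    (forall v w, in_box D Rb v -> in_box D Rb w -> Rabs (g i v - g i w) <= L * dist1 D v w) /\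
    (forall v, in_box D Rb v -> Rabs (g i v) <= M).
Proof.
  intros H. enough (HN : forall N, (N <= D)%nat -> exists L M, 0 <= L /\ 0 <= M /\
    forall i, (i < N)%nat ->
      (forall v w, in_box D Rb v -> in_box D Rb w -> Rabs (g i v - g i w) <= L * dist1 D v w) /\
      (forall v, in_box D Rb v -> Rabs (g i v) <= M)) by (apply HN; lia).
  induction N as [|N IH]; intros HN.
  - exists 0, 0. split; [lra|split; [lra|]]. intros; lia.
  - destruct IH as [L1 [M1 [HL1 [HM1 HI]]]]; [lia|].
    destruct (H N ltac:(lia)) as [L2 [M2 [HL2 [A2 B2]]]].
    assert (HM2 := Rle_abs M2).
    exists (L1 + L2), (M1 + Rabs M2). split; [lra|split; [assert (H3 := Rabs_pos M2); lra|]].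
    intros i Hi. assert (Hd : forall v w, 0 <= dist1 D v w) by apply dist1_nonneg.
    destruct (Nat.eq_dec i N) as [->|Hne].
    + split; intros.
      * eapply Rle_trans; [apply A2; auto|]. apply Rmult_le_compat_r; auto. lra.
      * eapply Rle_trans; [apply B2; auto|]. lra.
    + destruct (HI i ltac:(lia)) as [A1 B1]. split; intros.
      * eapply Rle_trans; [apply A1; auto|]. apply Rmult_le_compat_r; auto. lra.
      * eapply Rle_trans; [apply B1; auto|]. assert (H3 := Rabs_pos M2). lra.
Qed.

End LipOnBox.

Definition clip (Rb : R) (v : nat -> R) (j : nat) : R := Rmax (- Rb) (Rmin Rb (v j)).

Lemma clip_in_box D Rb v : 0 <= Rb -> in_box D Rb (clip Rb v).
Proof. intros H j _. unfold clip, Rmax, Rmin. repeat destruct Rle_dec; apply Rabs_le; lra. Qed.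

Lemma clip_contract Rb v w j : 0 <= Rb -> Rabs (clip Rb v j - clip Rb w j) <= Rabs (v j - w j).
Proof.
  intros H. unfold clip, Rmax, Rmin.
  repeat destruct Rle_dec; unfold Rabs; repeat destruct Rcase_abs; lra.
Qed.

Lemma clip_id D Rb v j : in_box D Rb v -> (j < D)%nat -> clip Rb v j = v j.
Proof.
  intros H Hj. specialize (H j Hj). apply Rabs_le_between in H.
  unfold clip, Rmax, Rmin. repeat destruct Rle_dec; lra.
Qed.

(* The solution comes from Picard iteration for the field clipped to the box. *)
Theorem ode_solution_while_in_box D Rb (G : (nat -> R) -> nat -> R) u0 : 0 <= Rb ->
  (forall i, (i < D)%nat -> lip_on_box D Rb (fun v => G v i)) ->
  (forall v w i, (forall j, (j < D)%nat -> v j = w j) -> G v i = G w i) ->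
  exists (u : nat -> R -> R) (M : R), 0 <= M /\
    (forall i, (i < D)%nat -> u i 0 = u0 i) /\
    (forall i t s, (i < D)%nat -> Rabs (u i t - u i s) <= M * Rabs (t - s)) /\
    (forall t, in_box D Rb (fun j => u j t) ->
       forall i, (i < D)%nat -> is_derive (u i) t (G (fun j => u j t) i)).
Proof.
  intros HRb Hlip Hloc.
  destruct (lip_on_box_uniform D Rb (fun i v => G v i) Hlip) as [L [M [HL [HM Hunif]]]].
  set (Gc := fun v i => G (clip Rb v) i).
  assert (HLc : lipschitz_field D Gc (L + 1)).
  { intros i v w Hi. destruct (Hunif i Hi) as [Hl _].
    eapply Rle_trans; [apply Hl; apply clip_in_box; auto|].
    assert (Hd := dist1_nonneg D v w).
    apply Rle_trans with (L * dist1 D v w); [|nra].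
    apply Rmult_le_compat_l; auto. apply sum_lt_le. intros; apply clip_contract; auto. }
  assert (HMc : bounded_field D Gc M).
  { intros i v Hi. destruct (Hunif i Hi) as [_ Hb]. apply Hb, clip_in_box; auto. }
  destruct (ode_global_existence D Gc (L + 1) M u0 HLc HMc ltac:(lra) HM) as [u [Hu0 [Hud Hul]]].
  exists u, M. split; [auto|split; [auto|split; [auto|]]].
  intros t Hb i Hi. replace (G (fun j => u j t) i) with (Gc (fun j => u j t) i); [apply Hud; auto|].
  apply Hloc. intros j Hj. apply (clip_id D); auto.
Qed.

Lemma eq_of_derive_0 (g : R -> R) a b :
  (forall s, Rmin a b <= s <= Rmax a b -> is_derive g s 0) -> g a = g b.
Proof.
  intros H. destruct (MVT_gen g a b (fun _ => 0)) as [c [_ Hc]].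
  - intros s Hs. apply H. lra.
  - intros s Hs. apply continuity_pt_filterlim, (continuous_of_is_derive _ _ 0), H; auto.
  - lra.
Qed.

Lemma everywhere_of_local_steps (P : R -> Prop) h :
  0 < h -> P 0 -> (forall tau t, P tau -> Rabs (t - tau) <= h -> P t) -> forall t, P t.
Proof.
  intros Hh H0 Hstep.
  assert (Hfw : forall N t, 0 <= t <= INR N * h -> P t).
  { induction N as [|N IH]; intros t Ht; [simpl in Ht; replace t with 0 by lra; auto|].
    rewrite S_INR in Ht. assert (0 <= INR N) by apply pos_INR.
    destruct (Rle_or_lt t (INR N * h)); [apply IH; lra|].
    apply (Hstep (INR N * h)); [apply IH; nra|]. rewrite Rabs_right; lra. }
  assert (Hbw : forall N t, - (INR N * h) <= t <= 0 -> P t).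
  { induction N as [|N IH]; intros t Ht; [simpl in Ht; replace t with 0 by lra; auto|].
    rewrite S_INR in Ht. assert (0 <= INR N) by apply pos_INR.
    destruct (Rle_or_lt (- (INR N * h)) t); [apply IH; lra|].
    apply (Hstep (- (INR N * h))); [apply IH; nra|]. rewrite Rabs_left; lra. }
  intros t. destruct (INR_archimed h (Rabs t) Hh) as [N HN].
  destruct (Rle_or_lt 0 t).
  - apply (Hfw N). rewrite Rabs_right in HN; lra.
  - apply (Hbw N). rewrite Rabs_left in HN; lra.
Qed.

(* Conserved quantities that confine the state to the box [B0] keep the solution of the clipped
   system inside the box [B0 + 1], where it solves the original system: the Lipschitz constant of
   the solution gives a uniform time step over which it cannot leave the larger box. *)
Theorem ode_global_of_conserved D (G : (nat -> R) -> nat -> R) u0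
    (E : nat -> (nat -> R) -> R) N B0 :
  0 <= B0 ->
  (forall i, (i < D)%nat -> lip_on_box D (B0 + 1) (fun v => G v i)) ->
  (forall v w i, (forall j, (j < D)%nat -> v j = w j) -> G v i = G w i) ->
  (forall v w m, (forall j, (j < D)%nat -> v j = w j) -> E m v = E m w) ->
  (forall v, (forall m, (m <= N)%nat -> E m v = E m u0) -> in_box D B0 v) ->
  (forall (u : nat -> R -> R) s m,
     (forall i, (i < D)%nat -> is_derive (u i) s (G (fun j => u j s) i)) ->
     is_derive (fun t => E m (fun j => u j t)) s 0) ->
  exists u : nat -> R -> R,
    (forall i, (i < D)%nat -> u i 0 = u0 i) /\
    (forall i t, (i < D)%nat -> is_derive (u i) t (G (fun j => u j t) i)).
Proof.
  intros HB0 Hlip HlocG HlocE Hconf Hcons.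
  destruct (ode_solution_while_in_box D (B0 + 1) G u0 ltac:(lra) Hlip HlocG)
    as [u [M [HM [Hu0 [Hul Hud]]]]].
  set (h := / (M + 1)). assert (Hh : 0 < h) by (apply Rinv_0_lt_compat; lra).
  assert (HMh : M * h <= 1).
  { apply Rmult_le_reg_r with (M + 1); [lra|]. unfold h. rewrite Rmult_assoc, Rinv_l; lra. }
  set (P := fun tau => forall m, (m <= N)%nat -> E m (fun j => u j tau) = E m u0).
  assert (Hnear : forall tau t,
            P tau -> Rabs (t - tau) <= h -> in_box D (B0 + 1) (fun j => u j t)).
  { intros tau t Ht Hd i Hi. assert (Hb := Hconf _ Ht i Hi). simpl in Hb.
    assert (Hl := Hul i t tau Hi).
    assert (M * Rabs (t - tau) <= M * h) by (apply Rmult_le_compat_l; auto).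
    replace (u i t) with ((u i t - u i tau) + u i tau) by ring.
    eapply Rle_trans; [apply Rabs_triang|]. lra. }
  assert (HP : forall t, P t).
  { apply (everywhere_of_local_steps P h Hh).
    - intros m _. apply HlocE. auto.
    - intros tau t Ht Hd m Hm. rewrite <- (Ht m Hm). symmetry.
      apply (eq_of_derive_0 (fun s => E m (fun j => u j s))).
      intros s Hs. apply Hcons. apply Hud. apply (Hnear tau s Ht).
      unfold Rmin, Rmax in Hs. destruct Rle_dec; unfold Rabs in *; repeat destruct Rcase_abs; lra. }
  exists u. split; [auto|]. intros i t Hi. apply Hud; auto. apply (Hnear t t (HP t)).
  rewrite Rminus_diag, Rabs_R0. lra.
Qed.

Fixpoint hornerC (c : nat -> C) (d : nat) (x : R) : C :=
  match d with O => c O | S d => (c O + RtoC x * hornerC (fun k => c (S k)) d x)%C end.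

Lemma hornerC_ext c e d x :
  (forall k, (k <= d)%nat -> c k = e k) -> hornerC c d x = hornerC e d x.
Proof.
  revert c e. induction d as [|d IH]; intros c e H; simpl; [apply H; lia|].
  rewrite H by lia. f_equal. f_equal. apply IH. intros; apply H; lia.
Qed.

Lemma hornerC_plus u w d x :
  hornerC (fun k => (u k + w k)%C) d x = (hornerC u d x + hornerC w d x)%C.
Proof. revert u w; induction d as [|d IH]; intros; simpl; auto. rewrite IH. ring. Qed.

Lemma hornerC_minus u w d x :
  hornerC (fun k => (u k - w k)%C) d x = (hornerC u d x - hornerC w d x)%C.
Proof. revert u w; induction d as [|d IH]; intros; simpl; auto. rewrite IH. ring. Qed.

Lemma hornerC_opp u d x : hornerC (fun k => (- u k)%C) d x = (- hornerC u d x)%C.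
Proof. revert u; induction d as [|d IH]; intros; simpl; auto. rewrite IH. ring. Qed.

Lemma hornerC_scal a u d x : hornerC (fun k => (a * u k)%C) d x = (a * hornerC u d x)%C.
Proof. revert u; induction d as [|d IH]; intros; simpl; auto. rewrite IH. ring. Qed.

Lemma hornerC_S c d x : hornerC c (S d) x = (hornerC c d x + c (S d) * RtoC (x ^ S d))%C.
Proof.
  revert c. induction d as [|d IH]; intros c; [simpl; rewrite Rmult_1_r; ring|].
  change (hornerC c (S (S d)) x) with (c O + RtoC x * hornerC (fun k => c (S k)) (S d) x)%C.
  rewrite IH. change (hornerC c (S d) x) with (c O + RtoC x * hornerC (fun k => c (S k)) d x)%C.
  change (x ^ S (S d)) with (x * x ^ S d). rewrite RtoC_mult. ring.
Qed.

Lemma hornerC_sh1 s d x :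
  hornerC (sh 1 s) d x = (RtoC x * hornerC s d x - s d * RtoC (x ^ S d))%C.
Proof.
  destruct d as [|d].
  - unfold sh. simpl. rewrite Rmult_1_r. ring.
  - change (hornerC (sh 1 s) (S d) x)
      with (sh 1 s O + RtoC x * hornerC (fun k => sh 1 s (S k)) d x)%C.
    rewrite (hornerC_ext _ s), hornerC_S.
    + unfold sh. simpl. change (x * x ^ d) with (x ^ S d). rewrite RtoC_mult. ring.
    + intros k _. unfold sh. simpl. rewrite Nat.sub_0_r. auto.
Qed.

Lemma hornerC_sh2 s d x :
  hornerC (sh 2 s) d x =
  (RtoC (x * x) * hornerC s d x - s d * RtoC (x ^ S (S d)) - sh 1 s d * RtoC (x ^ S d))%C.
Proof.
  destruct d as [|[|m]].
  - unfold sh. simpl. rewrite !Rmult_1_r, RtoC_mult. ring.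
  - unfold sh. simpl. rewrite !Rmult_1_r, !RtoC_mult. ring.
  - change (hornerC (sh 2 s) (S (S m)) x)
      with (sh 2 s O + RtoC x * (sh 2 s 1 + RtoC x * hornerC (fun k => sh 2 s (S (S k))) m x))%C.
    rewrite (hornerC_ext _ s), !hornerC_S.
    + unfold sh. simpl. rewrite ?Nat.sub_0_r, !RtoC_mult. ring.
    + intros k _. unfold sh. simpl. rewrite Nat.sub_0_r. auto.
Qed.

Lemma hornerC_fst c d x : fst (hornerC c d x) = horner (fun k => fst (c k)) d x.
Proof. revert c; induction d as [|d IH]; intros c; simpl; auto. rewrite IH. ring. Qed.

Lemma hornerC_snd c d x : snd (hornerC c d x) = horner (fun k => snd (c k)) d x.
Proof.
  revert c; induction d as [|d IH]; intros c; simpl; auto. rewrite IH, hornerC_fst. ring.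
Qed.

Lemma Cconj_RtoC (r : R) : Cconj (RtoC r) = RtoC r.
Proof. unfold Cconj, RtoC. simpl. f_equal. ring. Qed.

Lemma Cconj_Ci : Cconj Ci = (- Ci)%C.
Proof. unfold Cconj, Ci, Copp. simpl. f_equal. ring. Qed.

Lemma hornerC_opp_conj c d x :
  hornerC (fun k => (- Cconj (c k))%C) d x = (- Cconj (hornerC c d x))%C.
Proof.
  revert c; induction d as [|d IH]; intros c; simpl; auto.
  rewrite IH, Cplus_conj, Cmult_conj, Cconj_RtoC. ring.
Qed.

Definition rhs : Type := nat -> (nat -> C) -> (nat -> C) -> (nat -> C) -> nat -> C.

Record sym_state (n : nat) (f psi phi : nat -> C) : Prop := {
  sym_state_top : f (S n) <> 0%C;
  sym_state_f : forall k, Cconj (f k) = f k;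
  sym_state_psi : forall k, Cconj (psi k) = (- phi k)%C;
  sym_state_phi : forall k, Cconj (phi k) = (- psi k)%C;
  sym_state_psi_Sn : psi (S n) = 0%C;
  sym_state_phi_Sn : phi (S n) = 0%C }.

Record lax_system (Rf Rpsi Rphi : rhs) : Prop := {
  lax_f_real : forall n f psi phi, sym_state n f psi phi ->
    forall j, Cconj (Rf n f psi phi j) = Rf n f psi phi j;
  lax_phi_sym : forall n f psi phi, sym_state n f psi phi ->
    forall l, Rphi n f psi phi l = (- Cconj (Rpsi n f psi phi l))%C;
  lax_f_Sn : forall n f psi phi, sym_state n f psi phi -> Rf n f psi phi (S n) = 0%C;
  lax_identity : forall n f psi phi, sym_state n f psi phi -> forall x,
    (2 * hornerC f (S n) x * hornerC (Rf n f psi phi) (S n) x =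
     hornerC (Rpsi n f psi phi) n x * hornerC phi n x
     + hornerC psi n x * hornerC (Rphi n f psi phi) n x)%C }.

Lemma lax_identity_x n (f psi phi : nat -> C) x :
  f (S n) <> 0%C -> psi (S n) = 0%C -> phi (S n) = 0%C ->
  (2 * hornerC f (S n) x * hornerC (rhs_x_f n f psi phi) (S n) x =
   hornerC (rhs_x_psi n f psi phi) n x * hornerC phi n x
   + hornerC psi n x * hornerC (rhs_x_phi n f psi phi) n x)%C.
Proof.
  intros HF Hpsi Hphi. unfold rhs_x_f, rhs_x_psi, rhs_x_phi. cbv zeta.
  rewrite !hornerC_plus, hornerC_minus, !hornerC_scal, !hornerC_sh1.
  rewrite (hornerC_S psi), (hornerC_S phi), Hpsi, Hphi, (hornerC_S f n).
  unfold coef_a, coef_b. field. auto.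
Qed.

Lemma lax_identity_t n (f psi phi : nat -> C) x :
  f (S n) <> 0%C -> psi (S n) = 0%C -> phi (S n) = 0%C ->
  (2 * hornerC f (S n) x * hornerC (rhs_t_f n f psi phi) (S n) x =
   hornerC (rhs_t_psi n f psi phi) n x * hornerC phi n x
   + hornerC psi n x * hornerC (rhs_t_phi n f psi phi) n x)%C.
Proof.
  intros HF Hpsi Hphi. unfold rhs_t_f, rhs_t_psi, rhs_t_phi. cbv zeta.
  repeat first [ rewrite hornerC_plus | rewrite hornerC_minus | rewrite hornerC_opp
               | rewrite hornerC_scal ].
  rewrite !hornerC_sh1, !hornerC_sh2.
  rewrite (hornerC_S psi), (hornerC_S phi), Hpsi, Hphi, (hornerC_S f n).
  change (x ^ S (S n)) with (x * x ^ S n). rewrite !RtoC_mult.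
  unfold coef_a, coef_b, coef_c, coef_d. field. auto.
Qed.

Lemma Cconj_sh k (s : nat -> C) l : (forall m, Cconj (s m) = s m) -> Cconj (sh k s l) = sh k s l.
Proof. intros H. unfold sh. destruct (l <? k)%nat; [apply Cconj_RtoC|auto]. Qed.

Lemma Cconj_sh_opp k (s r : nat -> C) l :
  (forall m, Cconj (s m) = (- r m)%C) -> Cconj (sh k s l) = (- sh k r l)%C.
Proof. intros H. unfold sh. destruct (l <? k)%nat; [rewrite Cconj_RtoC, Copp_0|]; auto. Qed.

Ltac push_conj :=
  repeat first [ rewrite Cplus_conj | rewrite Cminus_conj | rewrite Cmult_conj | rewrite Copp_conj
               | rewrite Cdiv_conj by (auto; apply Cmult_neq_0; auto) ];
  rewrite ?Cconj_Ci, ?Cconj_RtoC.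

Ltac conj_state Hs :=
  let Hf := constr:(sym_state_f _ _ _ _ Hs) in
  let Hps := constr:(sym_state_psi _ _ _ _ Hs) in
  let Hph := constr:(sym_state_phi _ _ _ _ Hs) in
  repeat first [ rewrite (Cconj_sh_opp _ _ _ _ Hps) | rewrite (Cconj_sh_opp _ _ _ _ Hph)
               | rewrite (Cconj_sh _ _ _ Hf) ];
  rewrite ?Hf, ?Hps, ?Hph.

Lemma lax_system_x : lax_system rhs_x_f rhs_x_psi rhs_x_phi.
Proof.
  split; intros n f psi phi Hs; assert (HF := sym_state_top _ _ _ _ Hs).
  - intros j. unfold rhs_x_f, coef_a, coef_b. cbv zeta. push_conj. conj_state Hs. field. auto.
  - intros l. unfold rhs_x_phi, rhs_x_psi, coef_a, coef_b. cbv zeta. push_conj. conj_state Hs.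
    field. auto.
  - unfold rhs_x_f. cbv zeta.
    rewrite (sym_state_psi_Sn _ _ _ _ Hs), (sym_state_phi_Sn _ _ _ _ Hs). ring.
  - intros x. apply lax_identity_x; auto; apply Hs.
Qed.

Lemma lax_system_t : lax_system rhs_t_f rhs_t_psi rhs_t_phi.
Proof.
  split; intros n f psi phi Hs; assert (HF := sym_state_top _ _ _ _ Hs).
  - intros j. unfold rhs_t_f, coef_a, coef_b, coef_c, coef_d. cbv zeta. push_conj. conj_state Hs.
    field. auto.
  - intros l. unfold rhs_t_phi, rhs_t_psi, coef_a, coef_b, coef_c, coef_d. cbv zeta. push_conj.
    conj_state Hs. field. auto.
  - unfold rhs_t_f, coef_a, coef_b, coef_c, coef_d. cbv zeta.
    rewrite (sym_state_psi_Sn _ _ _ _ Hs), (sym_state_phi_Sn _ _ _ _ Hs).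
    unfold sh. simpl. rewrite Nat.sub_0_r. field. auto.
  - intros x. apply lax_identity_t; auto; apply Hs.
Qed.

(* A symmetric state is encoded by the real vector [v] of dimension [3 (n + 1)]:
   [v j = f_j] for [j <= n], then the real and the imaginary parts of [psi_0 .. psi_n];
   [f_(n+1)] is the constant [F], and [phi_l = - conj psi_l]. *)
Definition dim (n : nat) : nat := S n + S n + S n.

Definition state_f (n : nat) (F : R) (v : nat -> R) (j : nat) : C :=
  if (j <=? n)%nat then RtoC (v j) else if (j =? S n)%nat then RtoC F else 0%C.
Definition state_psi (n : nat) (v : nat -> R) (l : nat) : C :=
  if (l <=? n)%nat then (v (S n + l)%nat, v (S n + S n + l)%nat) else 0%C.
Definition state_phi (n : nat) (v : nat -> R) (l : nat) : C :=
  if (l <=? n)%nat then (- v (S n + l)%nat, v (S n + S n + l)%nat) else 0%C.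

Lemma state_f_Sn n F v : state_f n F v (S n) = RtoC F.
Proof.
  unfold state_f. rewrite leb_correct_conv, Nat.eqb_refl by lia. auto.
Qed.

Definition eval_rhs (Rr : rhs) (n : nat) (F : R) (v : nat -> R) : nat -> C :=
  Rr n (state_f n F v) (state_psi n v) (state_phi n v).

Definition lip_on_boxC (D : nat) (Rb : R) (g : (nat -> R) -> C) : Prop :=
  lip_on_box D Rb (fun v => fst (g v)) /\ lip_on_box D Rb (fun v => snd (g v)).

Section LipOnBoxC.

Variables (D : nat) (Rb : R).

Lemma lip_on_boxC_ext g h : (forall v, g v = h v) -> lip_on_boxC D Rb g -> lip_on_boxC D Rb h.
Proof.
  intros E [H1 H2].
  split; [apply (lip_on_box_ext _ _ _ _ (fun v => f_equal fst (E v)) H1)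
         |apply (lip_on_box_ext _ _ _ _ (fun v => f_equal snd (E v)) H2)].
Qed.

Lemma lip_on_boxC_const a : lip_on_boxC D Rb (fun _ => a).
Proof. split; apply lip_on_box_const. Qed.

Lemma lip_on_boxC_pair g h :
  lip_on_box D Rb g -> lip_on_box D Rb h -> lip_on_boxC D Rb (fun v => (g v, h v)).
Proof. intros; split; auto. Qed.

Lemma lip_on_boxC_plus g h :
  lip_on_boxC D Rb g -> lip_on_boxC D Rb h -> lip_on_boxC D Rb (fun v => (g v + h v)%C).
Proof. intros [A1 B1] [A2 B2]. split; apply lip_on_box_plus; auto. Qed.

Lemma lip_on_boxC_opp g : lip_on_boxC D Rb g -> lip_on_boxC D Rb (fun v => (- g v)%C).
Proof. intros [A1 B1]. split; apply lip_on_box_opp; auto. Qed.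

Lemma lip_on_boxC_minus g h :
  lip_on_boxC D Rb g -> lip_on_boxC D Rb h -> lip_on_boxC D Rb (fun v => (g v - h v)%C).
Proof. intros. apply lip_on_boxC_plus, lip_on_boxC_opp; auto. Qed.

Lemma lip_on_boxC_mult g h :
  lip_on_boxC D Rb g -> lip_on_boxC D Rb h -> lip_on_boxC D Rb (fun v => (g v * h v)%C).
Proof.
  intros [A1 B1] [A2 B2]. split; simpl.
  - apply (lip_on_box_ext _ _ (fun v => fst (g v) * fst (h v) + - (snd (g v) * snd (h v))));
      [intros; ring|].
    apply lip_on_box_plus; [|apply lip_on_box_opp]; apply lip_on_box_mult; auto.
  - apply lip_on_box_plus; apply lip_on_box_mult; auto.
Qed.

Lemma lip_on_boxC_inv_of_const g a :
  (forall v, g v = a) -> lip_on_boxC D Rb (fun v => (/ g v)%C).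
Proof.
  intros E. apply (lip_on_boxC_ext (fun _ => (/ a)%C)); [intros; rewrite E; auto|].
  apply lip_on_boxC_const.
Qed.

Lemma lip_on_boxC_sh k (s : (nat -> R) -> nat -> C) l :
  (forall m, lip_on_boxC D Rb (fun v => s v m)) -> lip_on_boxC D Rb (fun v => sh k (s v) l).
Proof. intros H. unfold sh. destruct (l <? k)%nat; [apply lip_on_boxC_const|apply H]. Qed.

End LipOnBoxC.

Section StateLip.

Variables (n : nat) (F Rb : R).

Lemma lip_on_boxC_state_f k : lip_on_boxC (dim n) Rb (fun v => state_f n F v k).
Proof.
  unfold state_f. destruct (k <=? n)%nat eqn:E; [|apply lip_on_boxC_const].
  apply Nat.leb_le in E. apply lip_on_boxC_pair; [apply lip_on_box_coord; unfold dim; lia|].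
  apply lip_on_box_const.
Qed.

Lemma lip_on_boxC_state_psi k : lip_on_boxC (dim n) Rb (fun v => state_psi n v k).
Proof.
  unfold state_psi. destruct (k <=? n)%nat eqn:E; [|apply lip_on_boxC_const].
  apply Nat.leb_le in E. apply lip_on_boxC_pair; apply lip_on_box_coord; unfold dim; lia.
Qed.

Lemma lip_on_boxC_state_phi k : lip_on_boxC (dim n) Rb (fun v => state_phi n v k).
Proof.
  unfold state_phi. destruct (k <=? n)%nat eqn:E; [|apply lip_on_boxC_const].
  apply Nat.leb_le in E.
  apply lip_on_boxC_pair; [apply lip_on_box_opp|]; apply lip_on_box_coord; unfold dim; lia.
Qed.

(* Only [f_(n+1)] is ever divided by, and it is the constant [F] on encoded states. *)
Ltac lip_rhs :=
  repeat first
    [ apply lip_on_boxC_plus | apply lip_on_boxC_minus | apply lip_on_boxC_opp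
    | (apply lip_on_boxC_inv_of_const with (a := (RtoC F * RtoC F)%C);
         intros; rewrite state_f_Sn; reflexivity)
    | (apply lip_on_boxC_inv_of_const with (a := RtoC F); intros; apply state_f_Sn)
    | apply lip_on_boxC_mult | apply lip_on_boxC_state_f | apply lip_on_boxC_state_psi
    | apply lip_on_boxC_state_phi | (apply lip_on_boxC_sh; intros) | apply lip_on_boxC_const ].

Lemma lip_on_boxC_rhs_x j :
  lip_on_boxC (dim n) Rb (fun v => eval_rhs rhs_x_f n F v j) /\
  lip_on_boxC (dim n) Rb (fun v => eval_rhs rhs_x_psi n F v j).
Proof.
  unfold eval_rhs, rhs_x_f, rhs_x_psi, coef_a, coef_b. cbv zeta. unfold Cdiv. split; lip_rhs.
Qed.

Lemma lip_on_boxC_rhs_t j :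
  lip_on_boxC (dim n) Rb (fun v => eval_rhs rhs_t_f n F v j) /\
  lip_on_boxC (dim n) Rb (fun v => eval_rhs rhs_t_psi n F v j).
Proof.
  unfold eval_rhs, rhs_t_f, rhs_t_psi, coef_a, coef_b, coef_c, coef_d. cbv zeta. unfold Cdiv.
  split; lip_rhs.
Qed.

End StateLip.

Definition reduced_field (Rf Rpsi : rhs) (n : nat) (F : R) (v : nat -> R) (i : nat) : R :=
  if (i <=? n)%nat then fst (eval_rhs Rf n F v i)
  else if (i <=? S n + n)%nat then fst (eval_rhs Rpsi n F v (i - S n))
  else snd (eval_rhs Rpsi n F v (i - (S n + S n))).

Definition lax_energy (n : nat) (F : R) (v : nat -> R) (x : R) : R :=
  horner (fun k => fst (state_f n F v k)) (S n) x ^ 2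
  + horner (fun k => fst (state_psi n v k)) n x ^ 2
  + horner (fun k => snd (state_psi n v k)) n x ^ 2.

Section Encoding.

Variables (n : nat) (F : R).

Lemma sym_state_encoded v : F <> 0 -> sym_state n (state_f n F v) (state_psi n v) (state_phi n v).
Proof.
  intros HF. split.
  - rewrite state_f_Sn. intros E. apply HF. apply (f_equal fst) in E. exact E.
  - intros k. unfold state_f.
    destruct (k <=? n)%nat; [|destruct (k =? S n)%nat]; apply Cconj_RtoC.
  - intros k. unfold state_psi, state_phi. destruct (k <=? n)%nat;
      [unfold Cconj, Copp; simpl; f_equal; ring|rewrite (Cconj_RtoC 0), Copp_0; auto].
  - intros k. unfold state_psi, state_phi. destruct (k <=? n)%nat;
      [unfold Cconj, Copp; simpl; f_equal; ring|rewrite (Cconj_RtoC 0), Copp_0; auto].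
  - unfold state_psi. rewrite leb_correct_conv by lia. auto.
  - unfold state_phi. rewrite leb_correct_conv by lia. auto.
Qed.

Lemma state_local v w : (forall j, (j < dim n)%nat -> v j = w j) ->
  state_f n F v = state_f n F w /\ state_psi n v = state_psi n w /\ state_phi n v = state_phi n w.
Proof.
  intros H. unfold dim in H. split; [|split]; apply functional_extensionality; intros j.
  - unfold state_f. destruct (j <=? n)%nat eqn:E; auto. apply Nat.leb_le in E.
    rewrite H; auto. lia.
  - unfold state_psi. destruct (j <=? n)%nat eqn:E; auto. apply Nat.leb_le in E.
    rewrite !H; auto; lia.
  - unfold state_phi. destruct (j <=? n)%nat eqn:E; auto. apply Nat.leb_le in E.
    rewrite !H; auto; lia.
Qed.

Lemma lax_energy_local v w x : (forall j, (j < dim n)%nat -> v j = w j) ->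
  lax_energy n F v x = lax_energy n F w x.
Proof.
  intros H. destruct (state_local v w H) as [A [B _]]. unfold lax_energy. rewrite A, B. auto.
Qed.

Variables (Rf Rpsi : rhs).

Lemma reduced_field_local v w i : (forall j, (j < dim n)%nat -> v j = w j) ->
  reduced_field Rf Rpsi n F v i = reduced_field Rf Rpsi n F w i.
Proof.
  intros H. destruct (state_local v w H) as [A [B C']].
  unfold reduced_field, eval_rhs. rewrite A, B, C'. auto.
Qed.

Lemma reduced_field_f v j : (j <= n)%nat ->
  reduced_field Rf Rpsi n F v j = fst (eval_rhs Rf n F v j).
Proof. intros H. unfold reduced_field. rewrite leb_correct by auto. auto. Qed.

Lemma reduced_field_re v l : (l <= n)%nat ->
  reduced_field Rf Rpsi n F v (S n + l) = fst (eval_rhs Rpsi n F v l).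
Proof.
  intros H. unfold reduced_field. rewrite leb_correct_conv, leb_correct by lia. do 3 f_equal. lia.
Qed.

Lemma reduced_field_im v l : (l <= n)%nat ->
  reduced_field Rf Rpsi n F v (S n + S n + l) = snd (eval_rhs Rpsi n F v l).
Proof.
  intros H. unfold reduced_field. rewrite !leb_correct_conv by lia. do 3 f_equal. lia.
Qed.

Lemma lip_on_box_reduced_field Rb i :
  (forall j, lip_on_boxC (dim n) Rb (fun v => eval_rhs Rf n F v j)) ->
  (forall j, lip_on_boxC (dim n) Rb (fun v => eval_rhs Rpsi n F v j)) ->
  lip_on_box (dim n) Rb (fun v => reduced_field Rf Rpsi n F v i).
Proof.
  intros H1 H2. unfold reduced_field.
  destruct (i <=? n)%nat; [apply H1|]. destruct (i <=? S n + n)%nat; apply H2.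
Qed.

End Encoding.

Lemma is_derive_pair (x y : R -> R) s dx dy : is_derive x s dx -> is_derive y s dy ->
  @is_derive R_AbsRing C_R_NormedModule (fun t => (x t, y t) : C) s ((dx, dy) : C).
Proof.
  intros Hx Hy.
  assert (H := is_derive_plus (V := C_R_NormedModule)
    (fun t => scal (x t) ((1, 0) : C)) (fun t => scal (y t) ((0, 1) : C)) s _ _
    (is_derive_scal_l (V := C_R_NormedModule) x s dx ((1, 0) : C) Hx)
    (is_derive_scal_l (V := C_R_NormedModule) y s dy ((0, 1) : C) Hy)).
  eapply is_derive_ext;
    [|replace ((dx, dy) : C) with (plus (scal dx ((1, 0) : C)) (scal dy ((0, 1) : C))); [exact H|]];
    simpl; unfold plus, scal; simpl; unfold prod_plus, prod_scal; simpl;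
    unfold plus, scal; simpl; unfold mult; simpl; intros; f_equal; ring.
Qed.

Lemma is_derive_horner (w : nat -> R -> R) (w' : nat -> R) d x s :
  (forall k, (k <= d)%nat -> is_derive (w k) s (w' k)) ->
  is_derive (fun t => horner (fun k => w k t) d x) s (horner w' d x).
Proof.
  revert w w'. induction d as [|d IH]; intros w w' H; simpl; [apply H; lia|].
  apply (is_derive_plus (fun t => w O t) (fun t => x * horner (fun k => w (S k) t) d x));
    [apply H; lia|].
  apply (is_derive_scal (fun t => horner (fun k => w (S k) t) d x)).
  apply (IH (fun k => w (S k)) (fun k => w' (S k))). intros; apply H; lia.
Qed.

Section Conservation.

Variables (Rf Rpsi Rphi : rhs) (n : nat) (F : R).
Hypotheses (Hlax : lax_system Rf Rpsi Rphi) (HF : F <> 0).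

(* For a symmetric state the first integral [f(x)^2 - psi(x) phi(x)] of [lax_identity] is
   [f(x)^2 + |psi(x)|^2], with real [f(x)]. *)
Lemma lax_energy_rate_0 v x :
  horner (fun k => fst (state_f n F v k)) (S n) x
    * horner (fun k => fst (eval_rhs Rf n F v k)) (S n) x
  + horner (fun k => fst (state_psi n v k)) n x * horner (fun k => fst (eval_rhs Rpsi n F v k)) n x
  + horner (fun k => snd (state_psi n v k)) n x * horner (fun k => snd (eval_rhs Rpsi n F v k)) n x
  = 0.
Proof.
  assert (Hs := sym_state_encoded n F v HF).
  assert (L := lax_identity _ _ _ Hlax _ _ _ _ Hs x).
  fold (eval_rhs Rf n F v) (eval_rhs Rpsi n F v) (eval_rhs Rphi n F v) in L.
  rewrite <- !hornerC_fst, <- !hornerC_snd.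
  assert (Ephi : hornerC (state_phi n v) n x = (- Cconj (hornerC (state_psi n v) n x))%C).
  { rewrite <- hornerC_opp_conj. apply hornerC_ext. intros k _.
    rewrite (sym_state_psi _ _ _ _ Hs). ring. }
  assert (Erhs : hornerC (eval_rhs Rphi n F v) n x
                 = (- Cconj (hornerC (eval_rhs Rpsi n F v) n x))%C).
  { rewrite <- hornerC_opp_conj. apply hornerC_ext. intros k _.
    apply (lax_phi_sym _ _ _ Hlax); auto. }
  assert (Ef : snd (hornerC (state_f n F v) (S n) x) = 0).
  { rewrite hornerC_snd. apply horner_zero. intros k _. unfold state_f.
    destruct (k <=? n)%nat; [|destruct (k =? S n)%nat]; auto. }
  rewrite Ephi, Erhs in L. apply (f_equal fst) in L. revert L Ef.
  generalize (hornerC (state_f n F v) (S n) x) (hornerC (eval_rhs Rf n F v) (S n) x)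
    (hornerC (eval_rhs Rpsi n F v) n x) (hornerC (state_psi n v) n x).
  intros [f1 f2] [a1 a2] [b1 b2] [p1 p2]. simpl. intros L Ef. subst f2. nra.
Qed.

Lemma lax_energy_derive_0 (u : nat -> R -> R) s x :
  (forall i, (i < dim n)%nat ->
     is_derive (u i) s (reduced_field Rf Rpsi n F (fun j => u j s) i)) ->
  is_derive (fun t => lax_energy n F (fun j => u j t) x) s 0.
Proof.
  intros Hd. set (v := fun j => u j s).
  assert (Hs := sym_state_encoded n F v HF). unfold dim in Hd.
  assert (Df : is_derive (fun t => horner (fun k => fst (state_f n F (fun j => u j t) k)) (S n) x)
                 s (horner (fun k => fst (eval_rhs Rf n F v k)) (S n) x)).
  { apply (is_derive_horner (fun k t => fst (state_f n F (fun j => u j t) k))). intros k Hk.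
    destruct (Nat.eq_dec k (S n)) as [->|Hne].
    - unfold eval_rhs. rewrite (lax_f_Sn _ _ _ Hlax _ _ _ _ Hs).
      unfold state_f. rewrite leb_correct_conv, Nat.eqb_refl by lia. simpl.
      apply (is_derive_const (K := R_AbsRing) (V := R_NormedModule)).
    - unfold state_f. rewrite leb_correct by lia. rewrite <- (reduced_field_f n F Rf Rpsi) by lia.
      apply Hd. lia. }
  assert (Dre : is_derive (fun t => horner (fun k => fst (state_psi n (fun j => u j t) k)) n x) s
                  (horner (fun k => fst (eval_rhs Rpsi n F v k)) n x)).
  { apply (is_derive_horner (fun k t => fst (state_psi n (fun j => u j t) k))). intros k Hk.
    unfold state_psi. rewrite leb_correct by lia. rewrite <- (reduced_field_re n F Rf Rpsi) by lia.
    apply Hd. lia. }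
  assert (Dim : is_derive (fun t => horner (fun k => snd (state_psi n (fun j => u j t) k)) n x) s
                  (horner (fun k => snd (eval_rhs Rpsi n F v k)) n x)).
  { apply (is_derive_horner (fun k t => snd (state_psi n (fun j => u j t) k))). intros k Hk.
    unfold state_psi. rewrite leb_correct by lia. rewrite <- (reduced_field_im n F Rf Rpsi) by lia.
    apply Hd. lia. }
  apply (is_derive_pow _ 2) in Df, Dre, Dim.
  assert (H := is_derive_plus _ _ s _ _ (is_derive_plus _ _ s _ _ Df Dre) Dim).
  unfold lax_energy. refine (eq_ind _ (is_derive _ s) H _ _).
  assert (R0 := lax_energy_rate_0 v x). unfold plus; cbn -[horner].
  fold v. rewrite <- (Rmult_0_r 2), <- R0. ring.
Qed.

End Conservation.

Lemma abs_le_of_sum_squares a b c B : a ^ 2 + b ^ 2 + c ^ 2 <= B ->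
  Rabs a <= 1 + B /\ Rabs b <= 1 + B /\ Rabs c <= 1 + B.
Proof.
  intros H.
  assert (Hy : forall y, Rabs y <= 1 + y ^ 2) by (intros y; unfold Rabs; destruct Rcase_abs; nra).
  assert (H1 := Hy a). assert (H2 := Hy b). assert (H3 := Hy c). repeat split; nra.
Qed.

(* Bounds on [lax_energy] at the [n + 2] nodes [0, ..., n + 1] bound the polynomials
   [f(x)], [Re psi(x)] and [Im psi(x)] there, hence all their coefficients. *)
Lemma lax_energy_confines n F : exists K, 0 <= K /\ forall v B,
  (forall m, (m <= S n)%nat -> lax_energy n F v (INR m) <= B) -> in_box (dim n) (K * (1 + B)) v.
Proof.
  destruct (horner_coef_bound (S n)) as [K1 [HK1 Hf]].
  destruct (horner_coef_bound n) as [K2 [HK2 Hpsi]].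
  exists (K1 + K2). split; [lra|]. intros v B H i Hi. unfold dim in Hi.
  assert (Hsq := fun m Hm => abs_le_of_sum_squares _ _ _ _ (H m Hm)).
  assert (HB : 0 <= 1 + B) by (specialize (H O ltac:(lia)); unfold lax_energy in H; nra).
  assert (0 <= K1 * (1 + B)) by nra. assert (0 <= K2 * (1 + B)) by nra.
  destruct (le_lt_dec i n) as [Hin|Hin]; [|destruct (le_lt_dec i (S n + n)) as [Hin2|Hin2]].
  - replace (v i) with (fst (state_f n F v i))
      by (unfold state_f; rewrite leb_correct by lia; auto).
    enough (Rabs (fst (state_f n F v i)) <= K1 * (1 + B)) by lra.
    apply (Hf (fun k => fst (state_f n F v k))); [|lia]. intros m Hm. apply Hsq; auto.
  - replace i with (S n + (i - S n))%nat by lia.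
    replace (v (S n + (i - S n))%nat) with (fst (state_psi n v (i - S n)))
      by (unfold state_psi; rewrite leb_correct by lia; auto).
    enough (Rabs (fst (state_psi n v (i - S n))) <= K2 * (1 + B)) by lra.
    apply (Hpsi (fun k => fst (state_psi n v k))); [|lia]. intros m Hm. apply Hsq; lia.
  - replace i with (S n + S n + (i - (S n + S n)))%nat by lia.
    replace (v (S n + S n + (i - (S n + S n)))%nat) with (snd (state_psi n v (i - (S n + S n))))
      by (unfold state_psi; rewrite leb_correct by lia; auto).
    enough (Rabs (snd (state_psi n v (i - (S n + S n)))) <= K2 * (1 + B)) by lra.
    apply (Hpsi (fun k => snd (state_psi n v k))); [|lia]. intros m Hm. apply Hsq; lia.
Qed.

Section ReducedSystem.

Variables (Rf Rpsi Rphi : rhs) (n : nat) (F : R).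
Hypotheses (Hlax : lax_system Rf Rpsi Rphi) (HF : F <> 0)
  (Hlip_f : forall Rb j, lip_on_boxC (dim n) Rb (fun v => eval_rhs Rf n F v j))
  (Hlip_psi : forall Rb j, lip_on_boxC (dim n) Rb (fun v => eval_rhs Rpsi n F v j)).

Lemma reduced_global_solution u0 : exists u : nat -> R -> R,
  (forall i, (i < dim n)%nat -> u i 0 = u0 i) /\
  (forall i t, (i < dim n)%nat ->
     is_derive (u i) t (reduced_field Rf Rpsi n F (fun j => u j t) i)).
Proof.
  destruct (lax_energy_confines n F) as [K [HK Hconf]].
  assert (Hnonneg : forall v x, 0 <= lax_energy n F v x) by (intros; unfold lax_energy; nra).
  set (B := sum_lt (S (S n)) (fun m => lax_energy n F u0 (INR m))).
  assert (HB : 0 <= B) by (apply sum_lt_nonneg; auto).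
  apply (ode_global_of_conserved (dim n) (reduced_field Rf Rpsi n F) u0
           (fun m v => lax_energy n F v (INR m)) (S n) (K * (1 + B))).
  - nra.
  - intros i _. apply lip_on_box_reduced_field; auto.
  - intros v w i H. apply reduced_field_local; auto.
  - intros v w m H. apply lax_energy_local; auto.
  - intros v Hv. apply Hconf. intros m Hm. rewrite Hv by auto.
    apply (sum_lt_ge_term _ (fun m => lax_energy n F u0 (INR m))); auto. lia.
  - intros u s m Hd. apply (lax_energy_derive_0 Rf Rpsi Rphi); auto.
Qed.

Variables (u : nat -> R -> R) (s : R).
Hypothesis Hu : forall i, (i < dim n)%nat ->
  is_derive (u i) s (reduced_field Rf Rpsi n F (fun j => u j s) i).

Lemma decoded_derive_f j : (j <= S n)%nat ->
  is_derive (fun t => state_f n F (fun i => u i t) j) s (eval_rhs Rf n F (fun i => u i s) j).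
Proof.
  intros Hj. assert (Hs := sym_state_encoded n F (fun i => u i s) HF).
  set (z := eval_rhs Rf n F (fun i => u i s) j).
  assert (Hz : z = (fst z, snd z)) by (destruct z; auto).
  destruct (le_lt_dec j n) as [Hjn|Hjn].
  - assert (Him : snd z = 0).
    { assert (E := lax_f_real _ _ _ Hlax _ _ _ _ Hs j). apply (f_equal snd) in E. simpl in E.
      unfold z, eval_rhs. lra. }
    rewrite Hz, Him. unfold state_f. rewrite leb_correct by auto.
    apply is_derive_pair; [|apply (is_derive_const (K := R_AbsRing) (V := R_NormedModule))].
    unfold z. rewrite <- (reduced_field_f n F Rf Rpsi) by auto. apply Hu. unfold dim. lia.
  - assert (Ej : j = S n) by lia. subst j.
    assert (Hz0 : z = (0, 0)%R) by (apply (lax_f_Sn _ _ _ Hlax _ _ _ _ Hs)). rewrite Hz0.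
    apply (is_derive_ext (K := R_AbsRing) (V := C_R_NormedModule) (fun _ => (F, 0) : C));
      [intros t; symmetry; apply state_f_Sn|].
    apply is_derive_pair; apply (is_derive_const (K := R_AbsRing) (V := R_NormedModule)).
Qed.

Lemma decoded_derive_psi_phi l : (l <= n)%nat ->
  is_derive (fun t => state_psi n (fun i => u i t) l) s (eval_rhs Rpsi n F (fun i => u i s) l) /\
  is_derive (fun t => state_phi n (fun i => u i t) l) s (eval_rhs Rphi n F (fun i => u i s) l).
Proof.
  intros Hl. assert (Hs := sym_state_encoded n F (fun i => u i s) HF).
  assert (Hre := Hu (S n + l) ltac:(unfold dim; lia)).
  assert (Him := Hu (S n + S n + l) ltac:(unfold dim; lia)).
  rewrite reduced_field_re in Hre by auto. rewrite reduced_field_im in Him by auto.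
  assert (Ephi : eval_rhs Rphi n F (fun i => u i s) l
                 = (- fst (eval_rhs Rpsi n F (fun i => u i s) l),
                    snd (eval_rhs Rpsi n F (fun i => u i s) l))%R).
  { unfold eval_rhs. rewrite (lax_phi_sym _ _ _ Hlax _ _ _ _ Hs). unfold Cconj, Copp; simpl.
    f_equal; ring. }
  rewrite Ephi. set (z := eval_rhs Rpsi n F (fun i => u i s) l) in *.
  unfold state_psi, state_phi. rewrite leb_correct by auto. split.
  - replace z with ((fst z, snd z) : C) by (destruct z; auto). apply is_derive_pair; auto.
  - apply is_derive_pair; auto. apply (is_derive_opp (fun t => u (S n + l)%nat t)). auto.
Qed.

End ReducedSystem.

Definition encode (n : nat) (f0 psi0 : nat -> C) (i : nat) : R :=
  if (i <=? n)%nat then fst (f0 i)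
  else if (i <=? S n + n)%nat then fst (psi0 (i - S n)%nat)
  else snd (psi0 (i - (S n + S n))%nat).

Lemma state_encode n F f0 psi0 :
  (forall j, (j <= n)%nat -> state_f n F (encode n f0 psi0) j = RtoC (fst (f0 j))) /\
  (forall l, (l <= n)%nat -> state_psi n (encode n f0 psi0) l = (fst (psi0 l), snd (psi0 l)) /\
     state_phi n (encode n f0 psi0) l = (- fst (psi0 l), snd (psi0 l))%R).
Proof.
  split.
  - intros j Hj. unfold state_f, encode. rewrite leb_correct by auto. auto.
  - intros l Hl. unfold state_psi, state_phi. rewrite (leb_correct l n) by auto. unfold encode.
    rewrite (leb_correct_conv n (S n + l)), (leb_correct (S n + l) (S n + n)),
      (leb_correct_conv n (S n + S n + l)), (leb_correct_conv (S n + n) (S n + S n + l)) by lia.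
    replace (S n + l - S n)%nat with l by lia.
    replace (S n + S n + l - (S n + S n))%nat with l by lia. auto.
Qed.

Theorem global_symmetric_solution (Rf Rpsi Rphi : rhs) n (f0 psi0 phi0 : nat -> C) :
  lax_system Rf Rpsi Rphi ->
  (forall F Rb j, lip_on_boxC (dim n) Rb (fun v => eval_rhs Rf n F v j)) ->
  (forall F Rb j, lip_on_boxC (dim n) Rb (fun v => eval_rhs Rpsi n F v j)) ->
  f0 (S n) <> 0%C ->
  (forall j, (j <= S n)%nat -> f0 j = Cconj (f0 j)) ->
  (forall l, (l <= n)%nat -> phi0 l = (- Cconj (psi0 l))%C) ->
  exists f psi phi : nat -> R -> C,
    global_solution n Rf Rpsi Rphi f0 psi0 phi0 f psi phi /\ symmetric_solution n f psi phi.
Proof.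
  intros Hlax Hlf Hlp Hf0 Hreal Hphi0.
  assert (Hf0_real : forall j, (j <= S n)%nat -> f0 j = RtoC (fst (f0 j))).
  { intros j Hj. specialize (Hreal j Hj). destruct (f0 j) as [a b]. injection Hreal. intros.
    unfold RtoC. f_equal. lra. }
  set (F := fst (f0 (S n))).
  assert (HF : F <> 0) by (intros E; apply Hf0; rewrite Hf0_real by auto; fold F; rewrite E; auto).
  destruct (reduced_global_solution Rf Rpsi Rphi n F Hlax HF (Hlf F) (Hlp F) (encode n f0 psi0))
    as [u [Hu0 Hu]].
  destruct (state_local n F (fun i => u i 0) (encode n f0 psi0) Hu0) as [Ef [Epsi Ephi]].
  destruct (state_encode n F f0 psi0) as [Ef0 Epsi0].
  set (v := fun t i => u i t).
  exists (fun j t => state_f n F (v t) j), (fun l t => state_psi n (v t) l),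
    (fun l t => state_phi n (v t) l).
  split; [split; [|split; [|split; [|split; [|split; [|split]]]]]|split].
  - intros j Hj. simpl. unfold v. rewrite Ef. destruct (le_lt_dec j n).
    + rewrite Ef0, <- Hf0_real; auto.
    + replace j with (S n) by lia. rewrite state_f_Sn. symmetry. apply Hf0_real. auto.
  - intros l Hl. simpl. unfold v. rewrite Epsi, Ephi. destruct (Epsi0 l Hl) as [-> ->].
    split; [destruct (psi0 l); auto|].
    rewrite Hphi0 by auto. unfold Cconj, Copp; simpl. f_equal; ring.
  - intros j t Hj. unfold state_f. rewrite leb_correct_conv by lia.
    replace (j =? S n)%nat with false by (symmetry; apply Nat.eqb_neq; lia). auto.
  - intros l t Hl. unfold state_psi, state_phi. rewrite leb_correct_conv by lia. auto.
  - intros t. apply (sym_state_top _ _ _ _ (sym_state_encoded n F (v t) HF)).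
  - intros j t Hj. apply (decoded_derive_f Rf Rpsi Rphi n F Hlax HF u t); auto.
  - intros l t Hl. apply (decoded_derive_psi_phi Rf Rpsi Rphi n F Hlax HF u t); auto.
  - intros j t _. symmetry. apply (sym_state_f _ _ _ _ (sym_state_encoded n F (v t) HF)).
  - intros l t _. rewrite (sym_state_psi _ _ _ _ (sym_state_encoded n F (v t) HF)). ring.
Qed.

Theorem lemma2 (n : nat) (f0 psi0 phi0 : nat -> C) :
  f0 (S n) <> 0%C ->
  (forall j, (j <= S n)%nat -> f0 j = Cconj (f0 j)) ->
  (forall l, (l <= n)%nat -> phi0 l = (- Cconj (psi0 l))%C) ->
  (exists f psi phi : nat -> R -> C,
      global_solution n rhs_t_f rhs_t_psi rhs_t_phi f0 psi0 phi0 f psi phi /\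
      symmetric_solution n f psi phi) /\
  (exists f psi phi : nat -> R -> C,
      global_solution n rhs_x_f rhs_x_psi rhs_x_phi f0 psi0 phi0 f psi phi /\
      symmetric_solution n f psi phi).
Proof.
  intros Hf0 Hreal Hphi0. split.
  - apply global_symmetric_solution; auto; [apply lax_system_t| |];
      intros; apply lip_on_boxC_rhs_t.
  - apply global_symmetric_solution; auto; [apply lax_system_x| |];
      intros; apply lip_on_boxC_rhs_x.
Qed.
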